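(* Consider the system $\dot v_1=-v_1^2-v_2$, $\dot v_2=-v_1v_2+v_1$ with initial data $(v_1(0),v_2(0))\in\mathbb{R}^2$. Its solution blows up in finite positive time if and only if $1-2v_2(0)\le v_1(0)^2$.
   Context: This is the extended system $\dot{\mathbf v}=-v_1\mathbf v+Q\mathbf v$ with $Q=\begin{pmatrix}0&-1\\1&0\end{pmatrix}$ (eigenvalues $\pm i$), governing $(v_1,v_2)=(V_x,E_x)$ along characteristics for the cold plasma case of the pressureless Euler–Poisson system $V_t+VV_x=kE-\gamma V$, $E_t+VE_x=NV$ with $k=-1$, $N=1$, $\gamma=0$. *)

From Stdlib Require Import Reals.
From Coquelicot Require Import Coquelicot.
Open Scope R_scope.

Definition is_solution_on (T x1 x2 : R) (v1 v2 : R -> R) : Prop :=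
  v1 0 = x1 /\ v2 0 = x2 /\
  filterlim v1 (at_right 0) (locally x1) /\
  filterlim v2 (at_right 0) (locally x2) /\
  (forall t, 0 < t < T ->
     is_derive v1 t (- (v1 t) ^ 2 - v2 t) /\
     is_derive v2 t (- (v1 t * v2 t) + v1 t)).

(** The solution with initial data (x1, x2) blows up in finite positive time:
    there is a finite T > 0 and a solution on [0, T) which is unbounded
    on [0, T) (i.e. the maximal forward existence time is finite). *)
Definition blows_up_in_finite_time (x1 x2 : R) : Prop :=
  exists T : R, 0 < T /\
    exists v1 v2 : R -> R, is_solution_on T x1 x2 v1 v2 /\
      ~ (exists M : R, forall t, 0 <= t < T -> Rabs (v1 t) + Rabs (v2 t) <= M).

From Stdlib Require Import Reals Lra Psatz Classical.
From Coquelicot Require Import Coquelicot.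
Open Scope R_scope.

(* Write w = 1 - v2. Both v1^2 + 2 v2 - 1 and w^2 solve the linear equation z' = -2 v1 z, so
   their ratio is a first integral. When x1^2 < 1 - 2 x2 this ratio is a negative constant -1/k,
   so v1^2 + 1 - 2 w = - w^2 / k: the orbit lies on a bounded ellipse, which moreover forces
   w >= 1/2 and hence keeps the ratio well defined for all time.
   Otherwise v1 = p'/p, v2 = 1 - (1 - x2)/p with p t = 1 - x2 + x2 cos t + x1 sin t is a
   solution; p oscillates around 1 - x2 with amplitude sqrt (x1^2 + x2^2) >= |1 - x2|, so it
   vanishes at some first time T > 0, and as p T = 0 the log-derivative v1 = p'/p is unbounded
   on [0, T). *)

Lemma filterlim_open {T : Type} {F : (T -> Prop) -> Prop} (f : T -> R) (l : R)
  (P : R -> Prop) :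
  filterlim f F (locally l) -> open P -> P l -> F (fun u => P (f u)).
Proof. intros Hf HP Hl. exact (Hf _ (HP l Hl)). Qed.

Lemma locally_R (x : R) (P : R -> Prop) :
  locally x P -> exists d, 0 < d /\ forall y, Rabs (y - x) < d -> P y.
Proof. intros [d Hd]. exists d. split; [apply cond_pos | exact Hd]. Qed.

Lemma at_right_R (x : R) (P : R -> Prop) :
  at_right x P -> exists d, 0 < d /\ forall y, x < y < x + d -> P y.
Proof.
  intros [d Hd]. exists d. split; [apply cond_pos|].
  intros y Hy. apply Hd; [|lra]. change (Rabs (y - x) < d). rewrite Rabs_right; lra.
Qed.

Lemma continuous_at_right (f : R -> R) (x : R) :
  continuous f x -> filterlim f (at_right x) (locally (f x)).
Proof. intros H. exact (filterlim_filter_le_1 _ (filter_le_within (F := locally x) _) H). Qed.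

Lemma filterlim_fun_plus {T : Type} {F : (T -> Prop) -> Prop} {FF : Filter F}
  (f g : T -> R) (lf lg : R) :
  filterlim f F (locally lf) -> filterlim g F (locally lg) ->
  filterlim (fun t => f t + g t) F (locally (lf + lg)).
Proof.
  intros Hf Hg. eapply filterlim_comp_2; [exact Hf | exact Hg |].
  exact (filterlim_plus (V := R_NormedModule) lf lg).
Qed.

Lemma filterlim_fun_mult {T : Type} {F : (T -> Prop) -> Prop} {FF : Filter F}
  (f g : T -> R) (lf lg : R) :
  filterlim f F (locally lf) -> filterlim g F (locally lg) ->
  filterlim (fun t => f t * g t) F (locally (lf * lg)).
Proof.
  intros Hf Hg. eapply filterlim_comp_2; [exact Hf | exact Hg |].
  exact (filterlim_mult (K := R_AbsRing) lf lg).
Qed.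

Lemma lub_approx (E : R -> Prop) (S u : R) : is_lub E S -> u < S -> exists s, E s /\ u < s.
Proof.
  intros [_ Hleast] Hu. apply NNPP; intros Hno.
  enough (S <= u) by lra.
  apply Hleast; intros s Hs. apply Rnot_lt_le; intros Hus. apply Hno; eauto.
Qed.

Lemma first_nonpos_point (f : R -> R) (a b : R) :
  a < b -> 0 < f a -> f b <= 0 ->
  filterlim f (at_right a) (locally (f a)) ->
  (forall t, a < t <= b -> continuous f t) ->
  exists tau, a < tau <= b /\ f tau <= 0 /\ forall t, a <= t < tau -> 0 < f t.
Proof.
  intros Hab Hfa Hfb Hright Hcont.
  set (E := fun s => a <= s <= b /\ forall u, a <= u <= s -> 0 < f u).
  assert (HEa : E a) by (split; [lra | intros u Hu; replace u with a by lra; exact Hfa]).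
  destruct (completeness E) as [S HS].
  { exists b. intros s [Hs _]. lra. }
  { exists a. exact HEa. }
  assert (HSb : S <= b) by (apply (proj2 HS); intros s [Hs _]; lra).
  assert (Hbelow : forall t, a <= t < S -> 0 < f t).
  { intros t Ht. destruct (lub_approx E S t HS (proj2 Ht)) as [s [[_ Hs] Hts]]. apply Hs; lra. }
  assert (HaS : a < S).
  { destruct (at_right_R a _ (filterlim_open f _ _ Hright (open_gt 0) Hfa)) as [d [Hd Hpos]].
    set (s := Rmin (a + d / 2) b).
    assert (Hs : a < s <= b) by (unfold s; split; [apply Rmin_glb_lt | apply Rmin_r]; lra).
    enough (E s) by (apply (proj1 HS) in H; lra).
    split; [lra|]. intros u Hu.
    destruct (Req_dec u a) as [-> | Hua]; [exact Hfa|].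
    apply Hpos. pose proof (Rmin_l (a + d / 2) b). fold s in H. lra. }
  exists S. split; [lra|]. split; [|exact Hbelow].
  apply Rnot_lt_le; intros HfS.
  assert (HSb' : S < b) by (destruct (Req_dec S b) as [-> | ?]; lra).
  destruct (locally_R S _ (filterlim_open f _ _ (Hcont S ltac:(lra)) (open_gt 0) HfS))
    as [d [Hd Hpos]].
  set (s := Rmin (S + d / 2) b).
  assert (Hs : S < s <= b) by (unfold s; split; [apply Rmin_glb_lt | apply Rmin_r]; lra).
  enough (E s) by (apply (proj1 HS) in H; lra).
  split; [lra|]. intros u Hu.
  destruct (Rlt_le_dec u S) as [HuS | HuS]; [apply Hbelow; lra|].
  apply Hpos. pose proof (Rmin_l (S + d / 2) b). fold s in H. rewrite Rabs_right; lra.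
Qed.

Lemma linear_ode_ratio_const (f g c : R -> R) (a b : R) :
  (forall t, a < t < b -> is_derive f t (c t * f t)) ->
  (forall t, a < t < b -> is_derive g t (c t * g t)) ->
  (forall t, a < t < b -> g t <> 0) ->
  forall s t, a < s < t -> t < b -> f s / g s = f t / g t.
Proof.
  intros Hf Hg Hg0 s t Hs Ht.
  assert (Hder : forall x, s <= x <= t -> is_derive (fun y => f y / g y) x 0).
  { intros x Hx.
    assert (Hgx := Hg0 x ltac:(lra)).
    replace 0 with ((c x * f x * g x - f x * (c x * g x)) / g x ^ 2) by (field; exact Hgx).
    apply is_derive_div; [apply Hf | apply Hg | exact Hgx]; lra. }
  destruct (MVT_cor2 (fun y => f y / g y) (fun _ => 0) s t (proj2 Hs)) as [x [Hx _]].
  { intros x Hx. apply is_derive_Reals, Hder, Hx. }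
  lra.
Qed.

Lemma linear_ode_solutions_proportional (f g c : R -> R) (a b : R) :
  filterlim f (at_right a) (locally (f a)) ->
  filterlim g (at_right a) (locally (g a)) ->
  (forall t, a < t < b -> is_derive f t (c t * f t)) ->
  (forall t, a < t < b -> is_derive g t (c t * g t)) ->
  (forall t, a < t < b -> g t <> 0) ->
  forall t, a <= t < b -> f t * g a = f a * g t.
Proof.
  intros Hfa Hga Hf Hg Hg0 t Ht.
  destruct (Req_dec t a) as [-> | Hta]; [ring|].
  set (h := fun s => f s * g t + - f t * g s).
  assert (Hzero : forall s, a < s < t -> h s = 0).
  { intros s Hs.
    assert (Hr := linear_ode_ratio_const f g c a b Hf Hg Hg0 s t Hs ltac:(lra)).
    assert (Hgs := Hg0 s ltac:(lra)). assert (Hgt := Hg0 t ltac:(lra)).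
    unfold h. replace (f s) with (f s / g s * g s) by (field; exact Hgs).
    rewrite Hr. field. exact Hgt. }
  assert (Hlim : filterlim h (at_right a) (locally (h a))).
  { apply filterlim_fun_plus; apply filterlim_fun_mult; try apply filterlim_const; assumption. }
  assert (Hlim0 : filterlim h (at_right a) (locally 0)).
  { apply (filterlim_ext_loc (fun _ => 0)); [|apply filterlim_const].
    exists (mkposreal (t - a) ltac:(lra)). intros s Hs Has. symmetry. apply Hzero.
    change (Rabs (s - a) < t - a) in Hs. apply Rabs_def2 in Hs. lra. }
  assert (Hha : h a = 0)
    by exact (filterlim_locally_unique (F := at_right a) h _ _ Hlim Hlim0).
  unfold h in Hha. lra.
Qed.

Lemma exists_cos_sin (a b : R) : a * a + b * b = 1 ->
  exists t, 0 <= t /\ cos t = a /\ sin t = b.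
Proof.
  intros H.
  assert (Ha : -1 <= a <= 1) by nra.
  assert (Hs : sin (acos a) = Rabs b).
  { rewrite sin_acos by exact Ha. rewrite <- sqrt_Rsqr_abs. f_equal. unfold Rsqr. lra. }
  destruct (acos_bound a) as [h1 h2].
  destruct (Rle_lt_dec 0 b) as [hb | hb].
  - exists (acos a). split; [lra|]. split; [apply cos_acos; exact Ha|].
    rewrite Hs, Rabs_right; lra.
  - exists (2 * PI - acos a). split; [pose proof PI_RGT_0; lra|].
    unfold Rminus.
    rewrite cos_plus, sin_plus, cos_neg, sin_neg, cos_2PI, sin_2PI, cos_acos by exact Ha.
    rewrite Hs, Rabs_left by lra. split; ring.
Qed.

(* If the log-derivative were bounded below by [-M], [f t * exp (M t)] would be nondecreasing. *)
Lemma log_derivative_unbounded_below (f df : R -> R) (a b M : R) :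
  a < b -> (forall t, a <= t <= b -> is_derive f t (df t)) ->
  (forall t, a <= t < b -> 0 < f t) -> f b <= 0 ->
  exists t, a <= t < b /\ df t / f t < - M.
Proof.
  intros Hab Hder Hpos Hfb. apply NNPP. intros Hno.
  set (g := fun t => f t * exp (M * t)).
  destruct (MVT_cor2 g (fun t => (df t + M * f t) * exp (M * t)) a b Hab) as [c [Hmvt Hc]].
  { intros c Hc. apply is_derive_Reals. unfold g.
    replace ((df c + M * f c) * exp (M * c))
      with (df c * exp (M * c) + f c * (M * exp (M * c))) by ring.
    apply (is_derive_mult f (fun t => exp (M * t)));
      [apply Hder; exact Hc | | intros; apply Rmult_comm].
    auto_derive; [exact I | ring]. }
  assert (Hfc : 0 < f c) by (apply Hpos; lra).
  assert (Hlog : - M <= df c / f c)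
    by (apply Rnot_lt_le; intros Hlt; apply Hno; exists c; split; [lra | exact Hlt]).
  assert (Hdf : 0 <= df c + M * f c).
  { replace (df c) with (df c / f c * f c) by (field; lra). nra. }
  pose proof (exp_pos (M * a)); pose proof (exp_pos (M * b)); pose proof (exp_pos (M * c)).
  assert (Hfa : 0 < f a) by (apply Hpos; lra).
  assert (f b * exp (M * b) <= 0) by nra.
  assert (0 <= (df c + M * f c) * exp (M * c) * (b - a)) by (apply Rmult_le_pos; nra).
  unfold g in Hmvt. nra.
Qed.

Section Subcritical.

Variables (T x1 x2 : R) (v1 v2 : R -> R).
Hypothesis Hsol : is_solution_on T x1 x2 v1 v2.

Definition quad (t : R) : R := v1 t * v1 t + 2 * v2 t - 1.
Definition gap (t : R) : R := 1 - v2 t.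

Let v1_init : v1 0 = x1 := proj1 Hsol.
Let v2_init : v2 0 = x2 := proj1 (proj2 Hsol).
Let v1_right : filterlim v1 (at_right 0) (locally x1) := proj1 (proj2 (proj2 Hsol)).
Let v2_right : filterlim v2 (at_right 0) (locally x2) := proj1 (proj2 (proj2 (proj2 Hsol))).
Let ode : forall t, 0 < t < T ->
    is_derive v1 t (- (v1 t) ^ 2 - v2 t) /\ is_derive v2 t (- (v1 t * v2 t) + v1 t)
  := proj2 (proj2 (proj2 (proj2 Hsol))).

Lemma quad_derive t : 0 < t < T -> is_derive quad t (-2 * v1 t * quad t).
Proof.
  intros Ht. destruct (ode t Ht) as [D1 D2].
  unfold quad. auto_derive; [repeat split; eexists; eassumption|].
  rewrite (is_derive_unique (fun s : R => v1 s) _ _ D1),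
    (is_derive_unique (fun s : R => v2 s) _ _ D2).
  ring.
Qed.

Lemma gap_derive t : 0 < t < T -> is_derive gap t (- v1 t * gap t).
Proof.
  intros Ht. destruct (ode t Ht) as [_ D2].
  unfold gap. auto_derive; [exists (- (v1 t * v2 t) + v1 t); exact D2|].
  rewrite (is_derive_unique (fun s : R => v2 s) _ _ D2). ring.
Qed.

Lemma gap_sq_derive t : 0 < t < T ->
  is_derive (fun s => gap s * gap s) t (-2 * v1 t * (gap t * gap t)).
Proof.
  intros Ht. replace (-2 * v1 t * (gap t * gap t))
    with ((- v1 t * gap t) * gap t + gap t * (- v1 t * gap t)) by ring.
  apply (is_derive_mult gap gap); [apply gap_derive; exact Ht .. | intros; apply Rmult_comm].
Qed.

Lemma gap_right_cont : filterlim gap (at_right 0) (locally (gap 0)).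
Proof.
  unfold gap. rewrite v2_init.
  apply (filterlim_ext (fun s => 1 + (-1) * v2 s)); [intros; ring|].
  replace (1 - x2) with (1 + (-1) * x2) by ring.
  apply filterlim_fun_plus, filterlim_fun_mult; [apply filterlim_const .. | exact v2_right].
Qed.

Lemma quad_right_cont : filterlim quad (at_right 0) (locally (quad 0)).
Proof.
  unfold quad. rewrite v1_init, v2_init.
  apply (filterlim_ext (fun s => v1 s * v1 s + 2 * v2 s + -1)); [intros; ring|].
  replace (x1 * x1 + 2 * x2 - 1) with (x1 * x1 + 2 * x2 + -1) by ring.
  repeat first [apply filterlim_fun_plus | apply filterlim_fun_mult | apply filterlim_const
               | exact v1_right | exact v2_right].
Qed.

Lemma quad_gap_sq_proportional tau : tau <= T ->
  (forall t, 0 <= t < tau -> 0 < gap t) ->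
  forall t, 0 <= t < tau -> quad t * (gap 0 * gap 0) = quad 0 * (gap t * gap t).
Proof.
  intros HtauT Hgap.
  apply (linear_ode_solutions_proportional quad (fun s => gap s * gap s) (fun s => -2 * v1 s)).
  - exact quad_right_cont.
  - exact (filterlim_fun_mult _ _ _ _ gap_right_cont gap_right_cont).
  - intros t Ht. apply quad_derive. lra.
  - intros t Ht. apply gap_sq_derive. lra.
  - intros t Ht. assert (0 < gap t) by (apply Hgap; lra). nra.
Qed.

Lemma gap_continuous t : 0 < t < T -> continuous gap t.
Proof.
  intros Ht. apply (ex_derive_continuous (V := R_NormedModule)).
  eexists. exact (gap_derive t Ht).
Qed.

Hypothesis Hsub : x1 ^ 2 < 1 - 2 * x2.

Let quad_init_neg : quad 0 < 0.
Proof. unfold quad. rewrite v1_init, v2_init. nra. Qed.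

Let gap_init_pos : 0 < gap 0.
Proof. unfold gap. rewrite v2_init. nra. Qed.

Lemma gap_pos t : 0 <= t < T -> 0 < gap t.
Proof.
  intros Ht. apply Rnot_le_lt. intros Hgt.
  assert (Ht0 : 0 < t)
    by (destruct (Req_dec t 0) as [-> | ?]; [pose proof gap_init_pos |]; lra).
  destruct (first_nonpos_point gap 0 t Ht0 gap_init_pos Hgt gap_right_cont)
    as [tau [Htau [Hgtau Hgap]]].
  { intros s Hs. apply gap_continuous. lra. }
  (* On [0, tau) the first integral gives quad <= 0, i.e. 2 gap >= 1 + v1^2 >= 1. *)
  assert (Hhalf : forall s, 0 <= s < tau -> 1 / 2 <= gap s).
  { intros s Hs.
    assert (Hprop := quad_gap_sq_proportional tau ltac:(lra) Hgap s Hs).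
    pose proof quad_init_neg; pose proof gap_init_pos.
    assert (0 < gap 0 * gap 0) by nra.
    assert (quad 0 * (gap s * gap s) <= 0) by nra.
    assert (Hquad : quad s <= 0) by nra.
    unfold quad, gap in *. nra. }
  destruct (locally_R tau _ (filterlim_open gap _ _ (gap_continuous tau ltac:(lra))
                               (open_lt (1 / 2)) ltac:(lra))) as [d [Hd Hlt]].
  set (s := tau - Rmin d tau / 2).
  assert (Hmin : 0 < Rmin d tau <= d) by (split; [apply Rmin_glb_lt | apply Rmin_l]; lra).
  assert (Hs : 0 <= s < tau) by (pose proof (Rmin_r d tau); unfold s; lra).
  specialize (Hlt s ltac:(unfold s; rewrite Rabs_left; lra)).
  specialize (Hhalf s Hs). lra.
Qed.

Lemma subcritical_solution_bounded :
  exists M, forall t, 0 <= t < T -> Rabs (v1 t) + Rabs (v2 t) <= M.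
Proof.
  set (k := gap 0 * gap 0 / - quad 0).
  assert (Hk : 0 < k).
  { pose proof quad_init_neg; pose proof gap_init_pos.
    unfold k. apply Rdiv_lt_0_compat; nra. }
  exists (2 + 6 * k). intros t Ht.
  assert (Hg := gap_pos t Ht).
  assert (Hrel : gap t * gap t = k * (2 * gap t - 1 - v1 t * v1 t)).
  { pose proof quad_init_neg.
    assert (Hprop := quad_gap_sq_proportional T (Rle_refl T) (fun s Hs => gap_pos s Hs) t Ht).
    unfold k. unfold quad in Hprop at 1. unfold gap in *. field_simplify_eq; [nra | lra]. }
  assert (Hgk : gap t < 2 * k) by nra.
  assert (Hv1 : v1 t * v1 t < 4 * k) by nra.
  assert (Rabs (v1 t) <= 1 + v1 t * v1 t) by (apply Rabs_le; split; nra).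
  assert (Rabs (v2 t) <= 1 + gap t) by (apply Rabs_le; unfold gap in *; split; lra).
  lra.
Qed.

End Subcritical.

Section ExplicitSolution.

Variables x1 x2 : R.

Definition profile (t : R) : R := 1 - x2 + x2 * cos t + x1 * sin t.
Definition profile_deriv (t : R) : R := - x2 * sin t + x1 * cos t.

Definition explicit_v1 (t : R) : R := profile_deriv t / profile t.
Definition explicit_v2 (t : R) : R := 1 - (1 - x2) / profile t.

Lemma profile_derive t : is_derive profile t (profile_deriv t).
Proof. unfold profile, profile_deriv. auto_derive; [exact I | ring]. Qed.

Lemma profile_continuous t : continuous profile t.
Proof. apply (ex_derive_continuous (V := R_NormedModule)). eexists. apply profile_derive. Qed.

Lemma profile_init : profile 0 = 1.
Proof. unfold profile. rewrite cos_0, sin_0. ring. Qed.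

Lemma profile_nonpos_somewhere : 1 - 2 * x2 <= x1 ^ 2 -> exists t, 0 < t /\ profile t <= 0.
Proof.
  intros Hc.
  set (r := sqrt (x1 * x1 + x2 * x2)).
  assert (Hpos : 0 < x1 * x1 + x2 * x2) by nra.
  assert (Hr : 0 < r) by (apply sqrt_lt_R0; exact Hpos).
  assert (Hr2 : r * r = x1 * x1 + x2 * x2) by (apply sqrt_sqrt; lra).
  destruct (exists_cos_sin (- x2 / r) (- x1 / r)) as [t [Ht [Hcos Hsin]]].
  { field_simplify_eq; [lra | lra]. }
  assert (Hpt : profile t = 1 - x2 - r).
  { unfold profile. rewrite Hcos, Hsin. field_simplify_eq; [nra | lra]. }
  assert (Hpt0 : profile t <= 0).
  { rewrite Hpt. assert ((1 - x2) * (1 - x2) <= r * r) by nra. nra. }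
  exists t. split; [|exact Hpt0].
  destruct (Req_dec t 0) as [-> | ?]; [rewrite profile_init in Hpt0; lra | lra].
Qed.

Lemma explicit_is_solution T : (forall t, 0 <= t < T -> 0 < profile t) ->
  is_solution_on T x1 x2 explicit_v1 explicit_v2.
Proof.
  intros Hpos.
  assert (Hv1 : explicit_v1 0 = x1)
    by (unfold explicit_v1, profile_deriv; rewrite profile_init, cos_0, sin_0; field).
  assert (Hv2 : explicit_v2 0 = x2) by (unfold explicit_v2; rewrite profile_init; field).
  assert (Hp0 : profile 0 <> 0) by (rewrite profile_init; lra).
  split; [exact Hv1|]. split; [exact Hv2|]. split; [|split].
  - rewrite <- Hv1. apply continuous_at_right, (ex_derive_continuous (V := R_NormedModule)).
    unfold explicit_v1, profile_deriv. unfold profile in Hp0 |- *. auto_derive. exact Hp0.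
  - rewrite <- Hv2. apply continuous_at_right, (ex_derive_continuous (V := R_NormedModule)).
    unfold explicit_v2. unfold profile in Hp0 |- *. auto_derive. exact Hp0.
  - intros t Ht. assert (Hpt : profile t <> 0) by (apply Rgt_not_eq, Hpos; lra).
    unfold explicit_v1, explicit_v2, profile_deriv. unfold profile in Hpt |- *.
    split; (auto_derive; [exact Hpt | field; exact Hpt]).
Qed.

End ExplicitSolution.

Theorem mainTheorem15 (x1 x2 : R) :
  blows_up_in_finite_time x1 x2 <-> 1 - 2 * x2 <= x1 ^ 2.
Proof.
  split.
  - intros [T [_ [v1 [v2 [Hsol Hunbounded]]]]].
    apply Rnot_lt_le. intros Hsub. apply Hunbounded.
    exact (subcritical_solution_bounded T x1 x2 v1 v2 Hsol Hsub).
  - intros Hsuper.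
    destruct (profile_nonpos_somewhere x1 x2 Hsuper) as [t0 [Ht0 Hpt0]].
    destruct (first_nonpos_point (profile x1 x2) 0 t0) as [T [HT [HpT Hpos]]];
      [exact Ht0 | rewrite profile_init; lra | exact Hpt0
      | apply continuous_at_right, profile_continuous | intros; apply profile_continuous |].
    exists T. split; [lra|].
    exists (explicit_v1 x1 x2), (explicit_v2 x1 x2).
    split; [exact (explicit_is_solution x1 x2 T Hpos)|].
    intros [M HM].
    destruct (log_derivative_unbounded_below (profile x1 x2) (profile_deriv x1 x2) 0 T M)
      as [t [Ht Hlt]]; [lra | intros; apply profile_derive | exact Hpos | exact HpT |].
    specialize (HM t Ht). fold (explicit_v1 x1 x2 t) in Hlt.
    pose proof (Rabs_pos (explicit_v2 x1 x2 t)).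
    pose proof (Rle_abs (- explicit_v1 x1 x2 t)). rewrite Rabs_Ropp in *. lra.
Qed.
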